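(* Let $G=\mathrm{Sl}(2,\mathbb R)$ acting on $\mathbb P^1$, let $W=\{(a,b)\in\mathbb R^2: a\ge0,\ |b|\le a\}$ and $S_W=\{g\in\mathrm{Sl}(2,\mathbb R): gW\subset W\}$. The core of the invariant control set of $S_W$ in $\mathbb P^1$ is $C_0=\{[(a,b)]:(a,b)\in\mathrm{int}W\}$. For $g\in\mathrm{Sl}(2,\mathbb R)$ and $0\ne z\in\mathbb R^2$ let $\rho(g,[z])=\|gz\|/\|z\|$ (Euclidean norm). Then: (i) $\|g(1,0)\|\ge 1/2$ for all $g\in S_W$; (ii) for every $z\in C_0$ there is $h\in S_W$ with $z=h[(1,0)]$ and $\rho(g,z)\ge 1/(2\|h\|)$ for all $g\in S_W$ (where $\|h\|$ is the operator norm), so $\inf_{g\in S_W}\rho(g,z)>0$; (iii) nevertheless $\inf\{\rho(g,z): g\in S_W,\ z\in C_0\}=0$, i.e. no lower bound uniform in $z\in C_0$ exists.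
   Context: Here $\rho(g,[z])=\|gz\|/\|z\|$ is the cocycle $\rho_\lambda$ for $\mathrm{Sl}(2,\mathbb R)$ associated with the functional $\lambda$ on the diagonal subalgebra satisfying $\lambda(\mathrm{diag}(1,-1))=1$. The invariant control set of $S_W$ is the unique maximal subset $D\subset\mathbb P^1$ with nonempty interior, $D\subset\mathrm{cl}(S_Wx)$ for all $x\in D$, and $S_WD\subset D$; its core is the set of its points fixed by some element of $\mathrm{int}S_W$. *)

From mathcomp Require Import all_boot all_order all_algebra.
From mathcomp Require Import all_classical all_reals.
Set Implicit Arguments. Unset Strict Implicit. Unset Printing Implicit Defensive.
Import Order.TTheory GRing.Theory Num.Theory.
Local Open Scope ring_scope.
Local Open Scope classical_set_scope.

Section Defs.
Variable R : realType.

Definition cx (z : 'cV[R]_2) : R := z ord0 ord0.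
Definition cy (z : 'cV[R]_2) : R := z ord_max ord0.

Definition vec2 (a b : R) : 'cV[R]_2 := \col_i (if i == ord0 then a else b).
Definition e1 : 'cV[R]_2 := vec2 1 0.

Definition enorm (z : 'cV[R]_2) : R := Num.sqrt (cx z ^+ 2 + cy z ^+ 2).

Definition opnorm (h : 'M[R]_2) : R :=
  sup [set enorm (h *m u) | u in [set u | enorm u = 1]].

Definition SL2 (g : 'M[R]_2) : Prop := \det g = 1.

Definition W (z : 'cV[R]_2) : Prop := 0 <= cx z /\ `|cy z| <= cx z.
Definition intW (z : 'cV[R]_2) : Prop := `|cy z| < cx z.

Definition S_W (g : 'M[R]_2) : Prop := SL2 g /\ forall z, W z -> W (g *m z).

(* points of P^1 are represented by nonzero vectors; [z] = [w] iff w = t z, t<>0 *)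
Definition projeq (z w : 'cV[R]_2) : Prop := exists t : R, t != 0 /\ w = t *: z.

Definition C0 (z : 'cV[R]_2) : Prop := z != 0 /\ exists w, intW w /\ projeq w z.

Definition rho (g : 'M[R]_2) (z : 'cV[R]_2) : R := enorm (g *m z) / enorm z.

End Defs.

From mathcomp Require Import all_boot all_order all_algebra.
From mathcomp Require Import all_classical all_reals.
From mathcomp Require Import ring lra.
Import Order.TTheory GRing.Theory Num.Theory.
Local Open Scope ring_scope.
Local Open Scope classical_set_scope.

Set Implicit Arguments.
Unset Strict Implicit.

(* Writing g = [[p, q], [r, s]], g maps W into W iff it maps the two edges
   (1, 1) and (1, -1) of the cone into W, i.e. iff |r + s| <= p + q and
   |r - s| <= p - q.  Since 2 (ps - qr) = (p - q)(r + s) - (p + q)(r - s), the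
   determinant condition then forces p^2 - q^2 >= 1, so the first coordinate of
   g e1 is at least 1: this gives (i) with 1 in place of 1/2.
   A point [(a, b)] of C_0 is the image of [e1] under the hyperbolic rotation
   h = [[a, b], [b, a]] / sqrt(a^2 - b^2), which lies in S_W; then
   rho(g, h e1) = |g h e1| / |h e1| >= 1 / |h e1| >= 1 / |h|, which is (ii).
   For (iii), the hyperbolic rotation with eigenvalues 1/y on (1, 1) and y on
   (1, -1) lies in S_W and maps (1 + y^2, y^2 - 1) in int W to (2y, 0). *)

Lemma inf_eq0_of_ge0 (R : realType) (S : set R) :
  lbound S 0 -> (forall e : R, 0 < e -> exists2 x, S x & x < e) -> inf S = 0.
Proof.
move=> S_ge0 S_small; have [x Sx _] := S_small 1 (@ltr01 R).
apply/eqP; rewrite eq_le lb_le_inf ?andbT //; last by exists x.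
rewrite leNgt; apply/negP => /S_small[y Sy]; apply/negP; rewrite -leNgt.
by apply: ge_inf => //; exists 0.
Qed.

Section CompressionSemigroup.
Variable R : realType.
Implicit Types (g h : 'M[R]_2) (z w : 'cV[R]_2).

Lemma sum_ord2 (F : 'I_2 -> R) : \sum_(i < 2) F i = F ord0 + F ord_max.
Proof. by rewrite big_ord_recr big_ord1; congr (F _ + F _); exact/val_inj. Qed.

Lemma det_mx2 g : \det g = g ord0 ord0 * g ord_max ord_max - g ord0 ord_max * g ord_max ord0.
Proof.
rewrite (expand_det_row _ ord0) sum_ord2 /cofactor !det_mx11 !mxE /=.
have -> : lift ord0 ord0 = ord_max :> 'I_2 by exact/val_inj.
have -> : lift ord_max ord0 = ord0 :> 'I_2 by exact/val_inj.
by rewrite expr0 expr1 !mul1r mulN1r mulrN.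
Qed.

Lemma cx_mulmx g z : cx (g *m z) = g ord0 ord0 * cx z + g ord0 ord_max * cy z.
Proof. by rewrite /cx /cy mxE sum_ord2. Qed.

Lemma cy_mulmx g z : cy (g *m z) = g ord_max ord0 * cx z + g ord_max ord_max * cy z.
Proof. by rewrite /cx /cy mxE sum_ord2. Qed.

Lemma cx_scale (t : R) z : cx (t *: z) = t * cx z.
Proof. by rewrite /cx mxE. Qed.

Lemma cy_scale (t : R) z : cy (t *: z) = t * cy z.
Proof. by rewrite /cy mxE. Qed.

Lemma cx_vec2 (a b : R) : cx (vec2 a b) = a.
Proof. by rewrite /cx mxE. Qed.

Lemma cy_vec2 (a b : R) : cy (vec2 a b) = b.
Proof. by rewrite /cy mxE. Qed.

Lemma cV2_ext z w : cx z = cx w -> cy z = cy w -> z = w.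
Proof.
move=> eqx eqy; apply/matrixP => i j; rewrite (ord1 j).
case: i => [[|[|//]] lti].
- by rewrite (_ : Ordinal lti = ord0) //; exact/val_inj.
- by rewrite (_ : Ordinal lti = ord_max) //; exact/val_inj.
Qed.

Lemma enorm_ge0 z : 0 <= enorm z.
Proof. exact: sqrtr_ge0. Qed.

Lemma enorm_ge_cx z : `|cx z| <= enorm z.
Proof. by rewrite /enorm -sqrtr_sqr ler_wsqrtr // lerDl sqr_ge0. Qed.

Lemma enorm_ge_cy z : `|cy z| <= enorm z.
Proof. by rewrite /enorm -sqrtr_sqr ler_wsqrtr // lerDr sqr_ge0. Qed.

Lemma enorm_le_norm_add z : enorm z <= `|cx z| + `|cy z|.
Proof.
rewrite /enorm -[leRHS]ger0_norm ?addr_ge0 // -sqrtr_sqr ler_wsqrtr //.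
rewrite -(real_normK (num_real (cx z))) -(real_normK (num_real (cy z))).
have := normr_ge0 (cx z); have := normr_ge0 (cy z); nra.
Qed.

Lemma enorm_scale (t : R) z : enorm (t *: z) = `|t| * enorm z.
Proof.
by rewrite /enorm cx_scale cy_scale !exprMn -mulrDr sqrtrM ?sqr_ge0 // sqrtr_sqr.
Qed.

Lemma enorm_e1 : enorm (e1 R) = 1.
Proof. by rewrite /enorm cx_vec2 cy_vec2 expr1n expr0n addr0 sqrtr1. Qed.

Lemma enorm_le_opnorm g z : enorm z = 1 -> enorm (g *m z) <= opnorm g.
Proof.
move=> z1; apply: sup_upper_bound; last by exists z.
split; first by exists (enorm (g *m z)), z.
exists (\sum_(i < 2) \sum_(j < 2) `|g i j|) => _ [u /= u1 <-].
rewrite !sum_ord2; apply: le_trans (enorm_le_norm_add _) _.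
have ux : `|cx u| <= 1 by rewrite -u1 enorm_ge_cx.
have uy : `|cy u| <= 1 by rewrite -u1 enorm_ge_cy.
have entry_bound (a : R) v : `|v| <= 1 -> `|a * v| <= `|a|.
  by move=> v1; rewrite normrM ler_piMr.
by rewrite cx_mulmx cy_mulmx; apply: lerD; apply: le_trans (ler_normD _ _) _;
  apply: lerD; apply: entry_bound.
Qed.

Lemma rho_ge0 g z : 0 <= rho g z.
Proof. by rewrite /rho divr_ge0 ?enorm_ge0. Qed.

Lemma rho_scale g (t : R) z : t != 0 -> rho g (t *: z) = rho g z.
Proof.
move=> t0; rewrite /rho -scalemxAr !enorm_scale invfM mulrACA.
by rewrite divff ?mul1r // normr_eq0.
Qed.

Lemma C0_intW w : intW w -> C0 w.
Proof.
move=> Ww; split; last by exists w; split=> //; exists 1; rewrite oner_neq0 scale1r.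
apply/eqP => w0; move: Ww; rewrite /intW w0 /cx /cy !mxE normr0.
by rewrite ltxx.
Qed.

Lemma W_mulmx g :
  `|g ord_max ord0 + g ord_max ord_max| <= g ord0 ord0 + g ord0 ord_max ->
  `|g ord_max ord0 - g ord_max ord_max| <= g ord0 ord0 - g ord0 ord_max ->
  forall z, W z -> W (g *m z).
Proof.
move=> + + z [_]; rewrite /W cx_mulmx cy_mulmx.
set p := g ord0 ord0; set q := g ord0 ord_max.
set r := g ord_max ord0; set s := g ord_max ord_max.
set x := cx z; set y := cy z.
rewrite !ler_norml => /andP[le_rs_pq le_pq_rs] /andP[le_rs_pq' le_pq_rs'] /andP[yx xy].
(* decompose z along the edges (1, 1) and (1, -1) of W *)
have -> : p * x + q * y = ((p + q) * (x + y) + (p - q) * (x - y)) / 2 by field.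
have -> : r * x + s * y = ((r + s) * (x + y) + (r - s) * (x - y)) / 2 by field.
have [xy0 xy0'] : 0 <= x + y /\ 0 <= x - y by lra.
by split; [|apply/andP; split]; nra.
Qed.

Lemma S_W_edges g : S_W g ->
  `|g ord_max ord0 + g ord_max ord_max| <= g ord0 ord0 + g ord0 ord_max /\
  `|g ord_max ord0 - g ord_max ord_max| <= g ord0 ord0 - g ord0 ord_max.
Proof.
move=> [_ gW].
have W_edge (t : R) : `|t| = 1 -> W (vec2 1 t) by rewrite /W cx_vec2 cy_vec2 => ->.
move: (gW _ (W_edge _ (normr1 R))) (gW _ (W_edge _ (normrN1 R))).
by rewrite /W !cx_mulmx !cy_mulmx !cx_vec2 !cy_vec2 !mulr1 !mulrN1 => -[_ ->] [_ ->].
Qed.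

Lemma S_W_entry00_ge1 g : S_W g -> 1 <= g ord0 ord0.
Proof.
move=> Sg; have [] := S_W_edges Sg; have := Sg.1; rewrite /SL2 det_mx2.
set p := g ord0 ord0; set q := g ord0 ord_max.
set r := g ord_max ord0; set s := g ord_max ord_max.
move=> det1 /[!ler_norml] /andP[rs_ge rs_le] /andP[rs_ge' rs_le'].
have [pq_ge0 pq_ge0'] : 0 <= p + q /\ 0 <= p - q by lra.
have : (p + q) * (r - s) - (p - q) * (r + s) = -2 by rewrite -det1; ring.
have : 1 <= (p + q) * (p - q) by nra.
nra.
Qed.

Lemma S_W_enorm_e1 g : S_W g -> 1 <= enorm (g *m e1 R).
Proof.
move=> Sg; apply: le_trans (enorm_ge_cx _).
rewrite cx_mulmx cx_vec2 cy_vec2 mulr1 mulr0 addr0.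
by apply: le_trans (S_W_entry00_ge1 Sg) (ler_norm _).
Qed.

Lemma S_W1 : S_W (1%:M : 'M[R]_2).
Proof. by split=> [|z]; rewrite ?/SL2 ?det1 ?mul1mx. Qed.

Lemma S_W_mul g h : S_W g -> S_W h -> S_W (g *m h).
Proof.
move=> [detg gW] [deth hW]; split; first by rewrite /SL2 det_mulmx detg deth mulr1.
by move=> z Wz; rewrite -mulmxA; apply/gW/hW.
Qed.

Lemma rho_orbit_ge g h : S_W g -> S_W h ->
  1 / enorm (h *m e1 R) <= rho g (h *m e1 R).
Proof.
move=> Sg Sh; have N_gt0 : 0 < enorm (h *m e1 R).
  by apply: lt_le_trans (S_W_enorm_e1 Sh).
by rewrite /rho ler_pM2r ?invr_gt0 // mulmxA S_W_enorm_e1 //; exact: S_W_mul.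
Qed.

Definition boost (c d : R) : 'M[R]_2 := \matrix_(i, j) if i == j then c else d.

Lemma S_W_boost (c d : R) : c ^+ 2 - d ^+ 2 = 1 -> `|d| <= c -> S_W (boost c d).
Proof.
move=> cd1 /[!ler_norml] /andP[dc dc']; split.
  by rewrite /SL2 det_mx2 !mxE /= -cd1 -!expr2.
by apply: W_mulmx; rewrite !mxE /= ler_norml; apply/andP; split; lra.
Qed.

Lemma C0_orbit z : C0 z -> exists2 h, S_W h & exists2 t : R, t != 0 & z = t *: (h *m e1 R).
Proof.
move=> [_ [w [Ww [t [t0 ->]]]]]; move: Ww; rewrite /intW.
set a := cx w; set b := cy w => ba.
have sq_gt0 : 0 < a ^+ 2 - b ^+ 2 by move: ba; rewrite ltr_norml => /andP[]; nra.
set s := Num.sqrt (a ^+ 2 - b ^+ 2).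
have s_gt0 : 0 < s by rewrite sqrtr_gt0.
have s0 : s != 0 by rewrite gt_eqF.
exists (boost (a / s) (b / s)).
  apply: S_W_boost.
    by rewrite !expr_div_n -mulrBl sqr_sqrtr ?ltW // divff ?gt_eqF.
  by rewrite normrM normfV (gtr0_norm s_gt0) ler_pM2r ?invr_gt0 ?ltW.
exists (t * s); first by rewrite mulf_neq0.
apply: cV2_ext; rewrite !(cx_scale, cy_scale, cx_mulmx, cy_mulmx, cx_vec2, cy_vec2).
all: by rewrite !mxE /= -/a -/b; field.
Qed.

Lemma rho_S_W_C0_small (e : R) : 0 < e -> exists g z, [/\ S_W g, C0 z & rho g z < e].
Proof.
move=> e_gt0; set y := e / 4; have y_gt0 : 0 < y by rewrite divr_gt0.
have y0 : y != 0 by rewrite gt_eqF.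
set z := vec2 (1 + y ^+ 2) (y ^+ 2 - 1).
set g := boost ((y^-1 + y) / 2) ((y^-1 - y) / 2).
have gz : g *m z = vec2 (2 * y) 0.
  by apply: cV2_ext; rewrite !(cx_mulmx, cy_mulmx, cx_vec2, cy_vec2) !mxE /=; field.
have y_inv_gt0 : 0 < y^-1 by rewrite invr_gt0.
exists g, z; split.
- apply: S_W_boost; first by field.
  by rewrite ler_norml; apply/andP; split; lra.
- apply: C0_intW; rewrite /intW cx_vec2 cy_vec2 ltr_norml; apply/andP; split; nra.
- have z_ge1 : 1 <= enorm z.
    by apply: le_trans (enorm_ge_cx _); rewrite cx_vec2 ger0_norm; nra.
  rewrite /rho gz /enorm cx_vec2 cy_vec2 expr0n addr0 sqrtr_sqr ger0_norm; last by lra.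
  rewrite -/(enorm z) ltr_pdivrMr; last by lra.
  have lt_y_e : 2 * y < e by rewrite /y; lra.
  by apply: lt_le_trans lt_y_e _; rewrite ler_peMr // ltW.
Qed.

End CompressionSemigroup.

Theorem mainTheorem6 (R : realType) :
  (* (i) *)
  (forall g : 'M[R]_2, S_W g -> 1 / 2 <= enorm (g *m e1 R))
  /\
  (* (ii) *)
  (forall z : 'cV[R]_2, C0 z ->
     (exists h : 'M[R]_2,
        S_W h /\ projeq (h *m e1 R) z /\
        (forall g : 'M[R]_2, S_W g -> 1 / (2 * opnorm h) <= rho g z))
     /\ 0 < inf ([set rho g z | g in [set g | S_W g]] : set R))
  /\
  (* (iii) *)
  inf ([set rho g z | g in [set g | S_W g] & z in [set z | C0 z]] : set R) = 0.
Proof.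
split; first by move=> g /S_W_enorm_e1; lra.
split=> [z /C0_orbit[h Sh [t t0 ->]]|].
  have N_ge1 := S_W_enorm_e1 Sh; have N_le := enorm_le_opnorm h (enorm_e1 R).
  have rho_ge g : S_W g -> 1 / enorm (h *m e1 R) <= rho g (t *: (h *m e1 R)).
    by move=> Sg; rewrite rho_scale //; exact: rho_orbit_ge.
  split.
    exists h; split=> //; split=> [|g /rho_ge]; first by exists t.
    apply: le_trans; rewrite !div1r lef_pV2 ?posrE; lra.
  apply: (@lt_le_trans _ _ (1 / enorm (h *m e1 R))); first by rewrite divr_gt0 //; lra.
  apply: lb_le_inf => [|_ [g /rho_ge ? <-] //].
  by exists (rho 1%:M (t *: (h *m e1 R))), 1%:M => //; exact: S_W1.
apply: inf_eq0_of_ge0 => [_ [g _ [z _ <-]]|e /rho_S_W_C0_small[g [z [Sg Cz lt_e]]]].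
  exact: rho_ge0.
by exists (rho g z) => //; exists g => //; exists z.
Qed.
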